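(* In the setting described in the context, $\frac{qAB-q^{-1}BA}{q-q^{-1}}=abI$, $\frac{qBA^*-q^{-1}A^*B}{q-q^{-1}}=a^*bI$, $\frac{qA^*B^*-q^{-1}B^*A^*}{q-q^{-1}}=a^*b^*I$, $\frac{qB^*A-q^{-1}AB^*}{q-q^{-1}}=ab^*I$.
   Context: $\mathbb K$ is an algebraically closed field, $q\in\mathbb K$ nonzero and not a root of unity, $V$ a nonzero finite-dimensional $\mathbb K$-vector space. A tridiagonal pair on $V$ is an ordered pair $A,A^*$ of linear maps $V\to V$ such that: (i) each of $A,A^*$ is diagonalizable; (ii) there is an ordering $V_0,\dots,V_d$ of the eigenspaces of $A$ with $A^*V_i\subseteq V_{i-1}+V_i+V_{i+1}$ ($V_{-1}=V_{d+1}=0$); (iii) there is an ordering $V^*_0,\dots,V^*_\delta$ of the eigenspaces of $A^*$ with $AV^*_i\subseteq V^*_{i-1}+V^*_i+V^*_{i+1}$ ($V^*_{-1}=V^*_{\delta+1}=0$); (iv) no subspace $W\ne0,V$ satisfies $AW\subseteq W$, $A^*W\subseteq W$. It is known $d=\delta$; orderings as in (ii),(iii) are called standard. Setting: $A,A^*$ is a tridiagonal pair on $V$; $V_0,\dots,V_d$ (resp. $V^*_0,\dots,V^*_d$) is a standard ordering of the eigenspaces of $A$ (resp. $A^*$); the eigenvalue of $A$ on $V_i$ is $aq^{2i-d}$ and that of $A^*$ on $V^*_i$ is $a^*q^{d-2i}$ ($0\le i\le d$) for some nonzero $a,a^*\in\mathbb K$; $b,b^*\in\mathbb K$ are nonzero.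 For $0\le i\le d$ the subspaces $(V^*_0+\cdots+V^*_i)\cap(V_0+\cdots+V_{d-i})$ form a decomposition of $V$ (their sum is direct, equals $V$, each is nonzero), as do the subspaces $(V^*_{d-i}+\cdots+V^*_d)\cap(V_i+\cdots+V_d)$. $B:V\to V$ is the linear map acting as $bq^{2i-d}I$ on $(V^*_0+\cdots+V^*_i)\cap(V_0+\cdots+V_{d-i})$ for each $i$, and $B^*:V\to V$ is the linear map acting as $b^*q^{d-2i}I$ on $(V^*_{d-i}+\cdots+V^*_d)\cap(V_i+\cdots+V_d)$ for each $i$. *)

From HB Require Import structures.
From mathcomp Require Import all_boot all_order all_algebra.
Set Implicit Arguments. Unset Strict Implicit. Unset Printing Implicit Defensive.
Import Order.TTheory GRing.Theory Num.Theory.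
Local Open Scope ring_scope.
Local Open Scope vspace_scope.
Import passmx.

Section TD.
Variables (K : fieldType) (vT : vectType K).

Definition diagonalizable (f : 'End(vT)) : Prop :=
  exists s : seq K, (\sum_(x <- s) leigenspace f x)%VS = fullv.

Definition eigen_ordering (f : 'End(vT)) (d : nat) (th : nat -> K) : Prop :=
  [/\ (forall i j, (i <= d)%N -> (j <= d)%N -> th i = th j -> i = j),
      (forall i, (i <= d)%N -> leigenspace f (th i) != 0%VS) &
      (forall x, leigenspace f x != 0%VS -> exists2 i, (i <= d)%N & x = th i)].

(* V_i with the convention V_{-1} = V_{d+1} = 0 *)
Definition Vpred (f : 'End(vT)) (th : nat -> K) (i : nat) : {vspace vT} :=
  if i is i'.+1 then leigenspace f (th i') else 0%VS.
Definition Vsucc (f : 'End(vT)) (d : nat) (th : nat -> K) (i : nat) : {vspace vT} :=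
  if (i < d)%N then leigenspace f (th i.+1) else 0%VS.

Definition standard_ordering (f g : 'End(vT)) (d : nat) (th : nat -> K) : Prop :=
  eigen_ordering f d th /\
  forall i, (i <= d)%N ->
    (g @: leigenspace f (th i) <= Vpred f th i + leigenspace f (th i) + Vsucc f d th i)%VS.

Definition tridiagonal_pair (A As : 'End(vT)) : Prop :=
  [/\ diagonalizable A, diagonalizable As,
      (exists d th, standard_ordering A As d th),
      (exists d th, standard_ordering As A d th) &
      (forall W : {vspace vT}, (A @: W <= W)%VS -> (As @: W <= W)%VS ->
         W = 0%VS \/ W = fullv)].

Definition Udec (A As : 'End(vT)) (d : nat) (th ths : nat -> K) (i : nat)
  : {vspace vT} :=
  ((\sum_(0 <= h < i.+1) leigenspace As (ths h)) :&:
   (\sum_(0 <= h < (d - i).+1) leigenspace A (th h)))%VS.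

Definition Udec_star (A As : 'End(vT)) (d : nat) (th ths : nat -> K) (i : nat)
  : {vspace vT} :=
  ((\sum_(d - i <= h < d.+1) leigenspace As (ths h)) :&:
   (\sum_(i <= h < d.+1) leigenspace A (th h)))%VS.

End TD.

(* Let U_i be the subspaces of the first decomposition. Standardness of the
   orderings gives (A - th_(d-i)) U_i <= U_(i+1) and (A* - th*_i) U_i <= U_(i-1),
   so the U_i span an A,A*-invariant subspace containing V*_0 <> 0, which is V
   by irreducibility. For v in U_i write
   A v = th_(d-i) v + w with w in U_(i+1); as B acts on U_i and U_(i+1) by
   b q^(2i-d) and q^2 b q^(2i-d), the w-terms cancel in q A B - q^-1 B A, which
   leaves (q - q^-1) th_(d-i) b q^(2i-d) v = (q - q^-1) a b v. The relation for B
   and A* is the same computation with the lowering map A* - th*_i. Finally the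
   second decomposition is the first one for the inverted orderings V_(d-i),
   V*_(d-i), which are again standard; inverting the orderings trades q for
   q^-1, and this gives the two relations for B*. *)

From Pilot Require Import Defs.
From HB Require Import structures.
From mathcomp Require Import all_boot all_order all_algebra.
From mathcomp Require Import zify ring.
Import Order.TTheory GRing.Theory Num.Theory.
Local Open Scope ring_scope.
Import passmx.

Section Eigenflags.
Context {K : fieldType} {vT : vectType K}.
Local Open Scope vspace_scope.
Implicit Types (f g : 'End(vT)) (th : nat -> K).

Lemma leigenspaceP f x v : reflect (f v = x *: v) (v \in leigenspace f x).
Proof.
rewrite memv_ker !lfunE /= opp_lfunE scale_lfunE id_lfunE subr_eq0; exact: eqP.
Qed.

Lemma limg_leigenspace f x : f @: leigenspace f x <= leigenspace f x.
Proof.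
apply/subvP => _ /memv_imgP[u /leigenspaceP fu ->].
by rewrite fu rpredZ //; apply/leigenspaceP.
Qed.

Lemma subv_sum_nat (U : nat -> {vspace vT}) n V :
  (forall h, (h < n)%N -> U h <= V) -> \sum_(0 <= h < n) U h <= V.
Proof. by move=> sUV; rewrite big_mkord; apply/subv_sumP => h _; apply: sUV. Qed.

Lemma sumv_sup_nat (U : nat -> {vspace vT}) {n h : nat} :
  (h < n)%N -> U h <= \sum_(0 <= j < n) U j.
Proof. by move=> hn; rewrite big_mkord (sumv_sup (Ordinal hn)). Qed.

Lemma lfun_eq_on_sumv {U : nat -> {vspace vT}} {n} {F G : 'End(vT)} :
  \sum_(0 <= i < n) U i = fullv ->
  (forall i v, (i < n)%N -> v \in U i -> F v = G v) -> F = G.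
Proof.
move=> sumU FG; apply/lfunP => v.
have : v \in lker (F - G).
  rewrite (subvP _ v (memvf v)) // -sumU; apply: subv_sum_nat => i ltin.
  by apply/subvP => u Uu; rewrite memv_ker add_lfunE opp_lfunE (FG i) ?subrr.
by rewrite memv_ker add_lfunE opp_lfunE subr_eq0 => /eqP.
Qed.

Lemma stable_sumv (c : nat -> K) (U : nat -> {vspace vT}) n f :
  (forall i v, (i < n)%N -> v \in U i -> f v - c i *: v \in \sum_(0 <= j < n) U j) ->
  f @: (\sum_(0 <= i < n) U i) <= \sum_(0 <= i < n) U i.
Proof.
move=> fU; rewrite limg_sum; apply: subv_sum_nat => i ltin.
apply/subvP => _ /memv_imgP[v Uv ->]; rewrite -(subrK (c i *: v) (f v)).
by rewrite rpredD ?rpredZ ?fU // (subvP (sumv_sup_nat U ltin)).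
Qed.

Definition eigenflag f th n := \sum_(0 <= h < n) leigenspace f (th h).

Lemma eigenflag0 f th : eigenflag f th 0 = 0.
Proof. exact: big_geq. Qed.

Lemma eigenflagS f th n : eigenflag f th n <= eigenflag f th n.+1.
Proof. by apply: subv_sum_nat => h hn; apply: sumv_sup_nat; apply: ltnW. Qed.

Lemma limg_eigenflag f th n : f @: eigenflag f th n <= eigenflag f th n.
Proof.
rewrite limg_sum; apply: subv_sum_nat => h hn.
exact: subv_trans (limg_leigenspace _ _) (sumv_sup_nat _ hn).
Qed.

Lemma eigenflag_lower f th n v :
  v \in eigenflag f th n.+1 -> f v - th n *: v \in eigenflag f th n.
Proof.
rewrite /eigenflag big_nat_recr //= => /memv_addP[u Fu [e /leigenspaceP fe ->]].
rewrite linearD /= fe scalerDr opprD addrACA subrr addr0.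
by rewrite rpredB ?rpredZ // (subvP (limg_eigenflag f th n)) ?memv_img.
Qed.

Lemma eigenflag_full {f d th} :
  Defs.diagonalizable f -> eigen_ordering f d th -> eigenflag f th d.+1 = fullv.
Proof.
move=> [s sumf] [_ _ cover]; apply/eqP; rewrite eqEsubv subvf /= -sumf.
elim/big_ind: _ => [|U V sU sV|x _]; rewrite ?sub0v ?subv_add ?sU ?sV //.
have [->|/cover[i lei ->]] := eqVneq (leigenspace f x) 0; first exact: sub0v.
exact: sumv_sup_nat.
Qed.

Lemma limg_eigenflag_std {f g d th n} : standard_ordering f g d th -> (n <= d)%N ->
  g @: eigenflag f th n.+1 <= eigenflag f th n.+2.
Proof.
move=> [_ std] led; rewrite limg_sum; apply: subv_sum_nat => h hn.
have led_h : (h <= d)%N by lia.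
apply: subv_trans (std h led_h) _.
rewrite !subv_add sumv_sup_nat ?andbT; last lia.
apply/andP; split.
  case: h hn {led_h} => [|h] hn /=; first exact: sub0v.
  apply: sumv_sup_nat; lia.
rewrite /Vsucc; case: ifP => _; last exact: sub0v.
apply: sumv_sup_nat; lia.
Qed.

End Eigenflags.

Section QBracket.
Context {K : fieldType} {vT : vectType K}.
Implicit Types (X Y : 'End(vT)) (q : K).

Definition qbracket q X Y : 'End(vT) :=
  ((q - q^-1)^-1 *: (q *: (X \o Y) - q^-1 *: (Y \o X)))%VF.

Lemma qbracketV q X Y : qbracket q^-1 Y X = qbracket q X Y.
Proof. by rewrite /qbracket invrK -opprB invrN scaleNr -scalerN opprB. Qed.

(* The last hypothesis says Y w = q^2 ga w without dividing by q, and holds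
   trivially when w = 0. *)
Lemma qbracket_eigen {q X Y} {al ga : K} {v w} : q - q^-1 != 0 ->
  X v = al *: v + w -> Y v = ga *: v -> q^-1 *: Y w = (q * ga) *: w ->
  qbracket q X Y v = (al * ga) *: v.
Proof.
move=> nzq Xv Yv Yw.
have XYv : X (Y v) = ga *: X v by rewrite Yv linearZ.
have YXv : Y (X v) = (al * ga) *: v + Y w.
  by rewrite Xv linearD linearZ /= Yv scalerA mulrC.
rewrite /qbracket scale_lfunE add_lfunE opp_lfunE !scale_lfunE !comp_lfunE.
rewrite XYv YXv Xv !scalerDr Yw !scalerA opprD.
rewrite scalerBr !scalerN !scalerA !mulrA addrACA subrr addr0 -scalerBl.
by congr (_ *: _); rewrite -!mulrA [ga * al]mulrC -mulrBr -mulrBl mulrA mulVf ?mul1r.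
Qed.

End QBracket.

Section Inversion.
Context {K : fieldType} {vT : vectType K}.
Local Open Scope vspace_scope.
Implicit Types (f g : 'End(vT)) (th : nat -> K).

Lemma sumv_nat_rev (U : nat -> {vspace vT}) d n : (n <= d)%N ->
  \sum_(d - n <= h < d.+1) U h = \sum_(0 <= h < n.+1) U (d - h)%N.
Proof.
move=> led; rewrite big_nat_rev -[X in \sum_(X <= _ < _) _]add0n big_addn.
rewrite (_ : (d.+1 - (d - n) = n.+1)%N); last lia.
by apply: eq_big_nat => h hn; congr U; lia.
Qed.

Lemma eigen_ordering_rev {f d th} :
  eigen_ordering f d th -> eigen_ordering f d (fun i => th (d - i)%N).
Proof.
move=> [inj nz cover]; split=> [i j lei lej /inj eqij|i lei|x /cover[i lei ->]].
- by have := eqij (leq_subr _ _) (leq_subr _ _); lia.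
- exact: nz (leq_subr _ _).
- by exists (d - i)%N; rewrite ?leq_subr ?subKn.
Qed.

Lemma standard_ordering_rev {f g d th} :
  standard_ordering f g d th -> standard_ordering f g d (fun i => th (d - i)%N).
Proof.
move=> [ord std]; split=> [|i lei]; first exact: eigen_ordering_rev.
have pred_rev : Vpred f th (d - i) = Vsucc f d (fun i => th (d - i)%N) i.
  rewrite /Vpred /Vsucc; case: ltnP => lti; first by rewrite -(subnSK lti).
  by rewrite (eqP lti).
have succ_rev : Vsucc f d th (d - i) = Vpred f (fun i => th (d - i)%N) i.
  rewrite /Vpred /Vsucc; case: i lei {pred_rev} => [|i] lei; first by rewrite subn0 ltnn.
  by rewrite ifT ?subnSK ?leq_subr.
have := std _ (leq_subr i d); rewrite pred_rev succ_rev.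
set P := Vpred _ _ _; set E := leigenspace _ _; set S := Vsucc _ _ _ _.
by rewrite (addvC (S + E)) (addvC S) addvA.
Qed.

Lemma Udec_star_rev (A As : 'End(vT)) d th ths i : (i <= d)%N ->
  Udec_star A As d th ths i =
  Udec A As d (fun h => th (d - h)%N) (fun h => ths (d - h)%N) i.
Proof.
move=> lei; congr (_ :&: _); first exact: sumv_nat_rev.
by rewrite -[in LHS](subKn lei) sumv_nat_rev ?leq_subr.
Qed.

End Inversion.

Section SplitDecomposition.
Context {K : fieldType} {vT : vectType K}.
Context {A As : 'End(vT)} {d : nat} {th ths : nat -> K}.
Hypotheses (stdA : standard_ordering A As d th) (stdAs : standard_ordering As A d ths).
Local Open Scope vspace_scope.
Local Notation U := (Udec A As d th ths).

(* The test [i < d] is needed because [Udec _ _ d _ _ d.+1] is not 0: the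
   subtraction [d - d.+1] truncates to 0. *)
Lemma Udec_raise {i v} : (i <= d)%N -> v \in U i ->
  A v - th (d - i)%N *: v \in (if (i < d)%N then U i.+1 else 0).
Proof.
move=> lei /memv_capP[vAs /eigenflag_lower].
case: ltnP => [ltid|geid]; last first.
  have /eqP -> : (d - i == 0)%N by rewrite subn_eq0.
  by rewrite eigenflag0.
rewrite -(subnSK ltid) => lowA; rewrite memv_cap lowA andbT.
apply: rpredB; first exact: subvP (limg_eigenflag_std stdAs lei) _ (memv_img A vAs).
by rewrite rpredZ // (subvP (eigenflagS _ _ _)).
Qed.

Lemma Udec_lower {i v} : (i <= d)%N -> v \in U i ->
  As v - ths i *: v \in (if i is i'.+1 then U i' else 0).
Proof.
move=> lei /memv_capP[/eigenflag_lower lowAs vA].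
case: i lei lowAs vA => [|i] lei lowAs vA; first by rewrite eigenflag0 in lowAs.
rewrite memv_cap lowAs /= -(subnSK lei); apply: rpredB.
  exact: subvP (limg_eigenflag_std stdA (leq_subr _ _)) _ (memv_img As vA).
by rewrite rpredZ // (subvP (eigenflagS _ _ _)).
Qed.

Lemma Udec0_neq0 : tridiagonal_pair A As -> U 0 != 0.
Proof.
case=> diagA _ _ _ _; have [[_ nzAs _] _] := stdAs.
rewrite /Udec subn0 -/(eigenflag A th d.+1) (eigenflag_full diagA stdA.1) capvf big_nat1.
exact: nzAs.
Qed.

Lemma sum_Udec : tridiagonal_pair A As -> \sum_(0 <= i < d.+1) U i = fullv.
Proof.
move=> TD; have [_ _ _ _ irr] := TD; set W := \sum_(0 <= i < d.+1) U i.
have memW j w : (j <= d)%N -> w \in U j -> w \in W.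
  by move=> lejd; apply: subvP (sumv_sup_nat U (lejd : j < d.+1)%N) w.
have AW : A @: W <= W.
  apply: (stable_sumv (fun i => th (d - i)%N)) => i v lei /(Udec_raise lei).
  case: ifP => [ltid | _]; first exact: memW.
  by rewrite memv0 => /eqP ->; rewrite rpred0.
have AsW : As @: W <= W.
  apply: (stable_sumv ths) => i v lei /(Udec_lower lei).
  by case: i lei => [|i] lei; [rewrite memv0 => /eqP->; rewrite rpred0 | apply/memW/ltnW].
have [W0|//] := irr W AW AsW.
have U0W : U 0 <= W := sumv_sup_nat U (ltn0Sn d).
by move: (Udec0_neq0 TD); rewrite -subv0 -W0 U0W.
Qed.

Hypothesis TD : tridiagonal_pair A As.
Context {B : 'End(vT)} {q k : K} {ga : nat -> K}.
Hypotheses (nzq : q - q^-1 != 0%R) (ga_rec : forall i, q * ga i = q^-1 * ga i.+1).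
Hypothesis B_Udec : forall i, (i <= d)%N -> forall v, v \in U i -> B v = ga i *: v.

Lemma Udec_qbracket_raise :
  (forall i, (i <= d)%N -> th (d - i)%N * ga i = k) -> qbracket q A B = k *: \1%VF.
Proof.
move=> th_ga; apply: (lfun_eq_on_sumv (sum_Udec TD)) => i v lei Uv.
rewrite [RHS]lfunE /= id_lfunE -(th_ga i lei).
have := Udec_raise lei Uv; set w := A v - _ => Uw.
apply: (qbracket_eigen (w := w) nzq _ (B_Udec _ lei _ Uv)); first by rewrite /w addrC subrK.
move: Uw; case: ifP => [ltid Uw | _]; last by rewrite memv0 => /eqP ->; rewrite !linear0.
by rewrite (B_Udec _ ltid _ Uw) scalerA ga_rec.
Qed.

Lemma Udec_qbracket_lower :
  (forall i, (i <= d)%N -> ths i * ga i = k) -> qbracket q B As = k *: \1%VF.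
Proof.
move=> ths_ga; rewrite -qbracketV.
apply: (lfun_eq_on_sumv (sum_Udec TD)) => i v lei Uv.
rewrite [RHS]lfunE /= id_lfunE -(ths_ga i lei).
have := Udec_lower lei Uv; set w := As v - _ => Uw.
have nzqV : q^-1 - q^-1^-1 != 0%R by rewrite invrK -opprB oppr_eq0.
apply: (qbracket_eigen (w := w) nzqV _ (B_Udec _ lei _ Uv)); first by rewrite /w addrC subrK.
case: i lei Uv w Uw {ths_ga} => [|i] lei Uv w Uw.
  by rewrite memv0 in Uw; rewrite (eqP Uw) !linear0.
by rewrite (B_Udec _ (ltnW lei) _ Uw) invrK scalerA ga_rec.
Qed.

End SplitDecomposition.

Section Exponents.
Context {K : fieldType}.

Lemma mulr_expz_add2 (q x : K) (m : int) : q != 0 ->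
  q * (x * q ^ m) = q^-1 * (x * q ^ (m + 2)).
Proof.
by move=> nzq; rewrite expfzDr // -[q ^ 2%:Z]/(q ^+ 2); field.
Qed.

Lemma mulr_expzN (q x y : K) (m : int) : q != 0 ->
  (x * q ^ (- m)) * (y * q ^ m) = x * y.
Proof. by move=> nzq; rewrite mulrACA -expfzDr // addNr expr0z mulr1. Qed.

Lemma subr_invr_neq0 {q : K} : q != 0 -> q ^+ 2 != 1 -> q - q^-1 != 0.
Proof.
move=> nzq; apply: contra; rewrite subr_eq0 => /eqP qE.
by rewrite expr2 {1}qE mulVf.
Qed.

End Exponents.

Theorem theorem7p1 (K : closedFieldType) (vT : vectType K) (q : K)
  (hq0 : q != 0) (hq : forall n : nat, (0 < n)%N -> q ^+ n != 1)
  (hV : (0 < \dim (fullv : {vspace vT}))%N)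
  (A As : 'End(vT)) (hTD : tridiagonal_pair A As)
  (d : nat) (a as_ : K) (ha : a != 0) (has : as_ != 0)
  (hstd : standard_ordering A As d (fun i => a * q ^ ((2 * i)%:Z - d%:Z)))
  (hstds : standard_ordering As A d (fun i => as_ * q ^ (d%:Z - (2 * i)%:Z)))
  (b bs : K) (hb : b != 0) (hbs : bs != 0) (B Bs : 'End(vT))
  (hB : forall i : nat, (i <= d)%N -> forall v : vT,
     v \in Udec A As d (fun i => a * q ^ ((2 * i)%:Z - d%:Z))
                       (fun i => as_ * q ^ (d%:Z - (2 * i)%:Z)) i ->
     B v = (b * q ^ ((2 * i)%:Z - d%:Z)) *: v)
  (hBs : forall i : nat, (i <= d)%N -> forall v : vT,
     v \in Udec_star A As d (fun i => a * q ^ ((2 * i)%:Z - d%:Z))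
                       (fun i => as_ * q ^ (d%:Z - (2 * i)%:Z)) i ->
     Bs v = (bs * q ^ (d%:Z - (2 * i)%:Z)) *: v) :
  [/\ (q - q^-1)^-1 *: (q *: (A \o B) - q^-1 *: (B \o A))%VF = (a * b) *: \1%VF,
      (q - q^-1)^-1 *: (q *: (B \o As) - q^-1 *: (As \o B))%VF = (as_ * b) *: \1%VF,
      (q - q^-1)^-1 *: (q *: (As \o Bs) - q^-1 *: (Bs \o As))%VF = (as_ * bs) *: \1%VF &
      (q - q^-1)^-1 *: (q *: (Bs \o A) - q^-1 *: (A \o Bs))%VF = (a * bs) *: \1%VF].
Proof.
set th := fun i : nat => a * q ^ ((2 * i)%:Z - d%:Z) in hstd hB hBs *.
set ths := fun i : nat => as_ * q ^ (d%:Z - (2 * i)%:Z) in hstds hB hBs *.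
have nzq : q - q^-1 != 0 := subr_invr_neq0 hq0 (hq 2%N isT).
have nzqV : q^-1 - q^-1^-1 != 0 by rewrite invrK -opprB oppr_eq0.
have hBs_rev i (lei : (i <= d)%N) v :
    v \in Udec A As d (fun i => th (d - i)%N) (fun i => ths (d - i)%N) i ->
    Bs v = (bs * q ^ (d%:Z - (2 * i)%:Z)) *: v.
  by rewrite -Udec_star_rev //; apply: hBs.
have [hstd_rev hstds_rev] := (standard_ordering_rev hstd, standard_ordering_rev hstds).
split.
- apply: (Udec_qbracket_raise hstd hstds hTD nzq _ hB) => [i | i lei].
    by rewrite mulr_expz_add2 //; congr (_ * (_ * q ^ _)); lia.
  by rewrite /th /= (_ : _ - _ = - ((2 * i)%:Z - d%:Z)) ?mulr_expzN //; lia.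
- apply: (Udec_qbracket_lower hstd hstds hTD nzq _ hB) => [i | i lei].
    by rewrite mulr_expz_add2 //; congr (_ * (_ * q ^ _)); lia.
  by rewrite /ths /= (_ : _ - _ = - ((2 * i)%:Z - d%:Z)) ?mulr_expzN //; lia.
- change (qbracket q As Bs = (as_ * bs) *: \1%VF); rewrite -qbracketV.
  apply: (Udec_qbracket_lower hstd_rev hstds_rev hTD nzqV _ hBs_rev) => [i | i lei].
    by rewrite invrK [RHS]mulr_expz_add2 //; congr (_ * (_ * q ^ _)); lia.
  by rewrite /ths /= (_ : _ - _ = - (d%:Z - (2 * i)%:Z)) ?mulr_expzN //; lia.
- change (qbracket q Bs A = (a * bs) *: \1%VF); rewrite -qbracketV.
  apply: (Udec_qbracket_raise hstd_rev hstds_rev hTD nzqV _ hBs_rev) => [i | i lei].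
    by rewrite invrK [RHS]mulr_expz_add2 //; congr (_ * (_ * q ^ _)); lia.
  by rewrite /th /= (_ : _ - _ = - (d%:Z - (2 * i)%:Z)) ?mulr_expzN //; lia.
Qed.
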